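(* Fix real numbers $\mu_D$, $\sigma_D>0$, $\mu_L>0$, $\sigma_L>0$, an odd integer $n\ge1$ and an integer $m\ge1$, and let $B(\rho)$ be the function defined in the context. Then $B(0)\le\lim_{\rho\to-1^+}B(\rho)$ if and only if $$m\ge\frac{\sigma_L\sqrt{\sigma_L^2+4n\mu_L(\mu_L+n)}-\sigma_L^2}{2\mu_L(\mu_L+n)}.$$ Moreover, if $n\ge3$ is odd and this inequality holds, then $B$ has at least one stationary point (a point where $B'=0$) in the interval $(-1,0)$.
   Context: For fixed real parameters $\mu_D$, $\sigma_D>0$, $\mu_L\ge0$, $\sigma_L\ge0$ and integers $n,m\ge1$, define for $\rho\in(-1,1)$ $$B(\rho)=\frac{2\sigma_L^2}{n^2m^2}\left(m(1-\rho^n)+\frac{n(1+\rho)}{1-\rho}-\frac{(1+\rho^2)(1-\rho^n)}{(1-\rho)^2}\right)+\frac{2\sigma_L^2\mu_D^2}{\sigma_D^2 m^2}+\left(\frac{2\mu_L^2}{n^2}+\frac{2\mu_L}{n}\right)(1-\rho^n)+1 .$$ (This is the bullwhip measure $\operatorname{Var}q_t/\operatorname{Var}D_t$ for AR(1) demand with autocorrelation $\rho$, mean $\mu_D$ and variance $\sigma_D^2$, i.i.d. lead times with mean $\mu_L$ and variance $\sigma_L^2$, moving-average demand forecast over $n$ periods and moving-average lead-time forecast over $m$ periods, under the order-up-to policy.) Note $B(0)$ is the bullwhip measure for i.i.d. demand. *)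

From Stdlib Require Import Reals Lra Lia Arith.
Open Scope R_scope.

Definition bullwhip (muD sigD muL sigL : R) (n m : nat) (rho : R) : R :=
  let nR := INR n in
  let mR := INR m in
  2 * sigL ^ 2 / (nR ^ 2 * mR ^ 2) *
    (mR * (1 - rho ^ n) + nR * (1 + rho) / (1 - rho)
     - (1 + rho ^ 2) * (1 - rho ^ n) / (1 - rho) ^ 2)
  + 2 * sigL ^ 2 * muD ^ 2 / (sigD ^ 2 * mR ^ 2)
  + (2 * muL ^ 2 / nR ^ 2 + 2 * muL / nR) * (1 - rho ^ n)
  + 1.

(* Domain of rho: the open interval (-1,1). A limit at -1 restricted to this
   domain is the one-sided limit rho -> -1^+. *)
Definition rho_dom (rho : R) : Prop := -1 < rho < 1.

From Stdlib Require Import Reals Lra Lia Arith.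
From Coquelicot Require Import Coquelicot.
Open Scope R_scope.

(* For odd n the jump from B(0) to B(-1^+) is 2/(n^2 m^2) times the quadratic
   q(m) = muL (muL + n) m^2 + sigL^2 m - sigL^2 n in m, so B(0) <= B(-1^+) iff m is
   at least the positive root of q.  When moreover n >= 3, B'(0) = 4 sigL^2 (n-1)/(n^2 m^2)
   > 0, so B dips below B(0) just left of 0; since B(-1) >= B(0), the intermediate value
   theorem gives z in [-1,0) with B(z) = B(0), and the mean value theorem on [z,0]
   yields the stationary point. *)

Lemma continuity_pt_limit1_in (f : R -> R) (D : R -> Prop) (x : R) :
  continuity_pt f x -> limit1_in f D (f x) x.
Proof.
  intros Hf eps Heps.
  destruct (Hf eps Heps) as [alp [Halp Hclose]].
  exists alp; split; [exact Halp|].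
  intros y [_ Hy].
  destruct (Req_dec x y) as [<- | Hxy]; [rewrite R_dist_eq; exact Heps|].
  apply Hclose; repeat split; assumption.
Qed.

Lemma derivable_pt_lim_pos_left (f : R -> R) (a b l : R) :
  derivable_pt_lim f b l -> 0 < l -> a < b -> exists h, a < h < b /\ f h < f b.
Proof.
  intros Hd Hl Hab.
  destruct (Hd (l / 2) ltac:(lra)) as [del Hdel].
  pose proof (cond_pos del) as Hdel0.
  set (k := - Rmin (del / 2) ((b - a) / 2)).
  assert (Hk : - ((b - a) / 2) <= k < 0).
  { unfold k; split.
    - apply Ropp_le_contravar, Rmin_r.
    - apply Ropp_lt_gt_0_contravar, Rmin_glb_lt; lra. }
  assert (Hkdel : Rabs k < del).
  { rewrite Rabs_left by lra; unfold k; rewrite Ropp_involutive.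
    apply Rle_lt_trans with (del / 2); [apply Rmin_l | lra]. }
  specialize (Hdel k ltac:(lra) Hkdel).
  apply Rabs_lt_between in Hdel.
  set (q := (f (b + k) - f b) / k) in Hdel.
  assert (Hq : f (b + k) - f b = q * k) by (unfold q; field; lra).
  exists (b + k); split; [lra | nra].
Qed.

Lemma exists_stationary_point (f f' : R -> R) (a b : R) :
  a < b -> (forall x, a <= x <= b -> derivable_pt_lim f x (f' x)) ->
  0 < f' b -> f b <= f a -> exists c, a < c < b /\ f' c = 0.
Proof.
  intros Hab Hd Hpos Hfab.
  destruct (derivable_pt_lim_pos_left f a b (f' b)) as [h [Hh Hfh]];
    [apply Hd; lra | exact Hpos | exact Hab |].
  assert (Hcont : forall x, a <= x <= b -> continuity_pt f x).
  { intros x Hx; apply derivable_continuous_pt; exists (f' x); apply Hd, Hx. }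
  assert (Hz : exists z, a <= z < b /\ f z = f b).
  { destruct (Req_dec (f a) (f b)) as [Heq | Hne]; [exists a; split; [lra | exact Heq]|].
    destruct (Ranalysis5.IVT_interv (fun t => f b - f t) a h) as [z [Hz Hfz]].
    - intros x Hx; apply continuity_pt_minus;
        [apply continuity_pt_const; intros ? ?; reflexivity | apply Hcont; lra].
    - lra.
    - lra.
    - lra.
    - exists z; split; [lra | simpl in Hfz; lra]. }
  destruct Hz as [z [Hz Hfz]].
  destruct (MVT_cor2 f f' z b ltac:(lra)) as [c [Hmvt Hc]];
    [intros x Hx; apply Hd; lra|].
  exists c; split; [lra|].
  rewrite Hfz, Rminus_diag in Hmvt.
  destruct (Rmult_integral _ _ (eq_sym Hmvt)); [assumption | lra].
Qed.

Lemma quadratic_nonneg_iff_ge_root (a c e x : R) : 0 < a -> 0 < c -> 0 < e -> 0 < x ->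
  0 <= a * x ^ 2 + c ^ 2 * x - c ^ 2 * e <->
  x >= (c * sqrt (c ^ 2 + 4 * e * a) - c ^ 2) / (2 * a).
Proof.
  intros Ha Hc He Hx.
  set (s := sqrt (c ^ 2 + 4 * e * a)).
  assert (Hs0 : 0 <= s) by apply sqrt_pos.
  assert (Hs2 : s * s = c ^ 2 + 4 * e * a) by (apply sqrt_sqrt; nra).
  set (root := (c * s - c ^ 2) / (2 * a)).
  set (neg_root := (- c * s - c ^ 2) / (2 * a)).
  assert (Hfactor : a * x ^ 2 + c ^ 2 * x - c ^ 2 * e = a * (x - root) * (x - neg_root)).
  { unfold root, neg_root; field_simplify; [|lra].
    replace (s ^ 2) with (s * s) by ring; rewrite Hs2; field; lra. }
  assert (Hneg_root : neg_root < 0).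
  { unfold neg_root, Rdiv; apply Rmult_neg_pos; [nra | apply Rinv_0_lt_compat; lra]. }
  rewrite Hfactor; split; intro H.
  - destruct (Rle_or_lt root x) as [Hle | Hlt]; [lra|].
    assert (0 < a * (root - x)) by (apply Rmult_lt_0_compat; lra).
    nra.
  - assert (0 <= a * (x - root)) by (apply Rmult_le_pos; lra).
    nra.
Qed.

Section Bullwhip.

Variables (muD sigD muL sigL : R) (n m : nat).
Hypotheses (HsigD : 0 < sigD) (Hn : (1 <= n)%nat) (Hm : (1 <= m)%nat).

Let B := bullwhip muD sigD muL sigL n m.

Let Hn0 : 0 < INR n.
Proof. apply lt_0_INR; lia. Qed.

Let Hm0 : 0 < INR m.
Proof. apply lt_0_INR; lia. Qed.

Lemma derivable_pt_lim_bullwhip (x : R) : x <> 1 -> derivable_pt_lim B x (Derive B x).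
Proof.
  intros Hx; apply is_derive_Reals, Derive_correct; unfold B, bullwhip; auto_derive.
  repeat split; try lra.
  apply Rmult_integral_contrapositive; split; lra.
Qed.

Lemma continuity_pt_bullwhip (x : R) : x <> 1 -> continuity_pt B x.
Proof.
  intros Hx; apply derivable_continuous_pt; exists (Derive B x).
  apply derivable_pt_lim_bullwhip, Hx.
Qed.

(* rho^n contributes nothing to B'(0) once n >= 2. *)
Lemma Derive_bullwhip_0 : (2 <= n)%nat ->
  Derive B 0 = 2 * sigL ^ 2 / (INR n ^ 2 * INR m ^ 2) * (2 * INR n - 2).
Proof.
  intros Hn2; apply is_derive_unique; unfold B, bullwhip; auto_derive.
  - repeat split; lra.
  - rewrite !pow_i by lia; field; lra.
Qed.

Lemma bullwhip_0 : B 0 =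
  2 * sigL ^ 2 / (INR n ^ 2 * INR m ^ 2) * (INR m + INR n - 1)
  + 2 * sigL ^ 2 * muD ^ 2 / (sigD ^ 2 * INR m ^ 2)
  + (2 * muL ^ 2 / INR n ^ 2 + 2 * muL / INR n) + 1.
Proof.
  unfold B, bullwhip; rewrite pow_i by lia.
  field; repeat split; lra.
Qed.

Lemma bullwhip_m1 : Nat.Odd n -> B (-1) =
  2 * sigL ^ 2 / (INR n ^ 2 * INR m ^ 2) * (2 * INR m - 1)
  + 2 * sigL ^ 2 * muD ^ 2 / (sigD ^ 2 * INR m ^ 2)
  + (2 * muL ^ 2 / INR n ^ 2 + 2 * muL / INR n) * 2 + 1.
Proof.
  intros [k Hk].
  assert (Hpow : (-1) ^ n = -1) by (rewrite Hk, Nat.add_1_r; apply pow_1_odd).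
  unfold B, bullwhip; rewrite Hpow.
  field; repeat split; lra.
Qed.

Lemma bullwhip_m1_sub_0 : Nat.Odd n -> B (-1) - B 0 =
  2 / (INR n ^ 2 * INR m ^ 2) *
  (muL * (muL + INR n) * INR m ^ 2 + sigL ^ 2 * INR m - sigL ^ 2 * INR n).
Proof. intros Hodd; rewrite bullwhip_m1, bullwhip_0 by exact Hodd; field; lra. Qed.

Lemma bullwhip_0_le_m1_iff : Nat.Odd n -> 0 < muL -> 0 < sigL ->
  B 0 <= B (-1) <->
  INR m >= (sigL * sqrt (sigL ^ 2 + 4 * INR n * muL * (muL + INR n)) - sigL ^ 2)
           / (2 * muL * (muL + INR n)).
Proof.
  intros Hodd HmuL HsigL.
  replace (4 * INR n * muL * (muL + INR n)) with (4 * INR n * (muL * (muL + INR n))) by ring.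
  replace (2 * muL * (muL + INR n)) with (2 * (muL * (muL + INR n))) by ring.
  rewrite <- quadratic_nonneg_iff_ge_root by (try apply Rmult_lt_0_compat; lra).
  assert (Hscale : 0 < 2 / (INR n ^ 2 * INR m ^ 2)).
  { apply Rdiv_lt_0_compat; [lra | apply Rmult_lt_0_compat; apply pow_lt; lra]. }
  pose proof (bullwhip_m1_sub_0 Hodd) as Hgap.
  split; intro H.
  - apply (Rmult_le_reg_l (2 / (INR n ^ 2 * INR m ^ 2))); [exact Hscale | lra].
  - assert (0 <= 2 / (INR n ^ 2 * INR m ^ 2) *
      (muL * (muL + INR n) * INR m ^ 2 + sigL ^ 2 * INR m - sigL ^ 2 * INR n))
      by (apply Rmult_le_pos; lra).
    lra.
Qed.

End Bullwhip.

Theorem mainTheorem11 (muD sigD muL sigL : R) (n m : nat) :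
  0 < sigD -> 0 < muL -> 0 < sigL ->
  Nat.Odd n -> (1 <= n)%nat -> (1 <= m)%nat ->
  (exists L : R,
     limit1_in (bullwhip muD sigD muL sigL n m) rho_dom L (-1) /\
     (bullwhip muD sigD muL sigL n m 0 <= L <->
      INR m >= (sigL * sqrt (sigL ^ 2 + 4 * INR n * muL * (muL + INR n)) - sigL ^ 2)
               / (2 * muL * (muL + INR n))))
  /\
  ((3 <= n)%nat ->
   INR m >= (sigL * sqrt (sigL ^ 2 + 4 * INR n * muL * (muL + INR n)) - sigL ^ 2)
            / (2 * muL * (muL + INR n)) ->
   exists rho : R, -1 < rho < 0 /\
     derivable_pt_lim (bullwhip muD sigD muL sigL n m) rho 0).
Proof.
  intros HsigD HmuL HsigL Hodd Hn Hm.
  set (B := bullwhip muD sigD muL sigL n m).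
  pose proof (bullwhip_0_le_m1_iff muD sigD muL sigL n m HsigD Hn Hm Hodd HmuL HsigL)
    as Hjump.
  split.
  - exists (B (-1)); split; [|exact Hjump].
    apply continuity_pt_limit1_in, continuity_pt_bullwhip; lra.
  - intros Hn3 Hroot.
    assert (Hslope : 0 < Derive B 0).
    { unfold B; rewrite Derive_bullwhip_0 by lia.
      assert (3 <= INR n) by (replace 3 with (INR 3) by (simpl; ring); apply le_INR, Hn3).
      assert (0 < INR m) by (apply lt_0_INR; lia).
      apply Rmult_lt_0_compat; [|lra].
      apply Rdiv_lt_0_compat; [nra | apply Rmult_lt_0_compat; apply pow_lt; lra]. }
    destruct (exists_stationary_point B (Derive B) (-1) 0) as [c [Hc Hc0]].
    + lra.
    + intros x Hx; apply derivable_pt_lim_bullwhip; lra.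
    + exact Hslope.
    + apply Hjump, Hroot.
    + exists c; split; [exact Hc|].
      rewrite <- Hc0; apply derivable_pt_lim_bullwhip; lra.
Qed.
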